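(* Let $X$ be a real reflexive Banach space and let $F \subset X$ be a convex existence set. For $v \in F$ and $t > 0$ put $F_t = (1-t)v + tF$, and let $C_v = \mathrm{cl}\left(\bigcup_{t>0} F_t\right)$. Then $C_v$ is an existence set.
   Context: For a non-empty set $F \subset X$ and $x \in X$, let $R_F(x) = \{ d \in F : \|d-c\| \le \|x-c\| \text{ for all } c \in F\}$. A non-empty set $F \subset X$ is an existence set if $R_F(x) \neq \emptyset$ for every $x \in X$. $\mathrm{cl}$ denotes norm closure. *)

From HB Require Import structures.
From mathcomp Require Import all_boot all_order all_algebra.
From mathcomp Require Import all_classical all_reals all_analysis.
Set Implicit Arguments. Unset Strict Implicit. Unset Printing Implicit Defensive.
Import Order.TTheory GRing.Theory Num.Theory.
Local Open Scope classical_set_scope.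
Local Open Scope ring_scope.

Section Defs.
Context {R : realType} {V : normedModType R}.

Definition bdd_lin_fun (f : V -> R) : Prop :=
  (forall (a : R) (x y : V), f (a *: x + y) = a * f x + f y) /\
  exists M : R, forall x : V, `|f x| <= M * `|x|.

(** Boundedness w.r.t. the dual norm
    ||f||* = inf {K | forall x, |f x| <= K ||x||} is written out as: there is
    M such that |Phi f| <= M K whenever K bounds f. *)
Definition bidual_elt (Phi : (V -> R) -> R) : Prop :=
  (forall (a : R) (f g : V -> R), bdd_lin_fun f -> bdd_lin_fun g ->
      Phi (fun x => a * f x + g x) = a * Phi f + Phi g) /\
  exists M : R, forall (f : V -> R) (K : R), bdd_lin_fun f ->
      (forall x : V, `|f x| <= K * `|x|) -> `|Phi f| <= M * K.

Definition reflexive_space : Prop :=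
  forall Phi : (V -> R) -> R, bidual_elt Phi ->
    exists x : V, forall f : V -> R, bdd_lin_fun f -> Phi f = f x.

Definition RF (F : set V) (x : V) : set V :=
  [set d | F d /\ forall c, F c -> `|d - c| <= `|x - c|].

Definition existence_set (F : set V) : Prop :=
  F !=set0 /\ forall x : V, RF F x !=set0.

Definition Ft (F : set V) (v : V) (t : R) : set V :=
  [set (1 - t) *: v + t *: y | y in F].

Definition Cv (F : set V) (v : V) : set V :=
  closure (\bigcup_(t in [set t : R | 0 < t]) Ft F v t).

End Defs.

From HB Require Import structures.
From mathcomp Require Import all_boot all_order all_algebra.
From mathcomp Require Import all_classical all_reals all_analysis.
From mathcomp Require Import ring lra.
Set Implicit Arguments. Unset Strict Implicit. Unset Printing Implicit Defensive.
Import Order.TTheory GRing.Theory Num.Theory numFieldNormedType.Exports.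
Local Open Scope classical_set_scope.
Local Open Scope ring_scope.

(* Pick [u n] in R_{F_(n+1)}(x).  As [v] lies in every F_t, the [u n] stay
   within [`|x - v|] of [v], so by reflexivity they have a weak cluster point
   [d]: the limit of [f (u n)] along an ultrafilter on [nat] is an element of
   the bidual, hence evaluation at some [d].  The F_t increase with t, so for
   [c] in F_s the closed ball of radius [`|x - c|] about [c] contains [u n] for
   all large [n]; being convex and closed it contains [d] by Mazur's lemma
   (Hahn-Banach separation), and likewise [d] lies in C_v.  Continuity of the
   norm extends [`|d - c| <= `|x - c|] from the union of the F_t to C_v. *)

Section HahnBanach.
Context {R : realType} {V : lmodType R}.
Implicit Types (p q : V -> R) (x y : V).

Definition sublinear p :=
  (forall x y, p (x + y) <= p x + p y) /\
  (forall (a : R) x, 0 < a -> p (a *: x) = a * p x).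

Definition linear_functional (f : V -> R) :=
  forall (a : R) x y, f (a *: x + y) = a * f x + f y.

Lemma sublinear0 p : sublinear p -> p 0 = 0.
Proof. by move=> [_ pZ]; have := pZ 2 0 (ltr0Sn R 1); rewrite scaler0 => /eqP; lra. Qed.

Lemma sublinear_geN p x : sublinear p -> - p (- x) <= p x.
Proof.
move=> hp; have := hp.1 x (- x); rewrite subrr sublinear0 //; lra.
Qed.

Lemma sublinearZ_ge0 p (a : R) x : sublinear p -> 0 <= a -> p (a *: x) = a * p x.
Proof.
move=> hp; rewrite le_eqVlt => /orP[/eqP <-|]; last exact: hp.2.
by rewrite scale0r mul0r sublinear0.
Qed.

Lemma inf_sublinear (S : V -> set R) :
  (forall x, S x !=set0) -> (forall x, has_lbound (S x)) ->
  (forall x y r s, S x r -> S y s -> exists2 u, S (x + y) u & u <= r + s) ->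
  (forall (a : R) x r, 0 < a -> S x r -> exists2 u, S (a *: x) u & u <= a * r) ->
  sublinear (fun x => inf (S x)).
Proof.
move=> Sne Slb SD SZ.
have infZ (a : R) x : 0 < a -> inf (S (a *: x)) <= a * inf (S x).
  move=> a0; rewrite -ler_pdivrMl //; apply: lb_le_inf (Sne x) _ => r Sxr.
  have [u Su ur] := SZ a x r a0 Sxr.
  by rewrite ler_pdivrMl //; apply: le_trans ur; exact: ge_inf Su.
split=> [x y|a x a0].
- suff : inf (S (x + y)) - inf (S y) <= inf (S x) by lra.
  apply: lb_le_inf (Sne x) _ => r Sxr.
  suff : inf (S (x + y)) - r <= inf (S y) by lra.
  apply: lb_le_inf (Sne y) _ => s Sys.
  have [u Su us] := SD x y r s Sxr Sys.
  have := ge_inf (Slb _) Su; lra.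
- apply/eqP; rewrite eq_le (infZ _ _ a0) /=.
  have := infZ a^-1 (a *: x); rewrite invr_gt0 => /(_ a0).
  by rewrite scalerA mulVf ?gt_eqF // scale1r ler_pdivlMl.
Qed.

Lemma chain_sublinear_lbound p (G : set (V -> R)) : G !=set0 ->
  (forall g, G g -> sublinear g /\ forall x, g x <= p x) ->
  (forall g1 g2, G g1 -> G g2 -> (forall x, g1 x <= g2 x) \/ (forall x, g2 x <= g1 x)) ->
  exists2 q, sublinear q & forall g, G g -> forall x, q x <= g x.
Proof.
move=> [g0 Gg0] GS Gtot.
pose S x := [set g x | g in G].
have Slb x : has_lbound (S x).
  exists (- p (- x)) => _ [g /GS[hg gp] <-].
  by apply: le_trans (sublinear_geN x hg); rewrite lerN2.
exists (fun x => inf (S x)); last by move=> g Gg x; apply: (ge_inf (Slb x)); exists g.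
apply: inf_sublinear => // [x|x y _ _ [g1 G1 <-] [g2 G2 <-]|a x _ a0 [g Gg <-]].
- by exists (g0 x), g0.
- case: (Gtot _ _ G1 G2) => h.
  + exists (g1 (x + y)); first by exists g1.
    by apply: le_trans ((GS _ G1).1.1 x y) _; rewrite lerD2l.
  + exists (g2 (x + y)); first by exists g2.
    by apply: le_trans ((GS _ G2).1.1 x y) _; rewrite lerD2r.
- exists (g (a *: x)); first by exists g.
  by rewrite (GS _ Gg).1.2.
Qed.

Lemma exists_minimal_sublinear p : sublinear p ->
  exists q, [/\ sublinear q, forall x, q x <= p x &
    forall r, sublinear r -> (forall x, r x <= q x) -> forall x, q x <= r x].
Proof.
move=> hp.
pose T := {q | sublinear q /\ forall x, q x <= p x}.
pose ge_fun (q1 q2 : T) := `[< forall x, sval q2 x <= sval q1 x >].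
have [[q [hq qp]] qmin] : exists q : T, premaximal ge_fun q.
  apply: (ZL_preorder (exist _ p (conj hp (fun x => lexx _)))).
  - by move=> q; apply/asboolP.
  - move=> q1 q2 q3 /asboolP h12 /asboolP h23; apply/asboolP => x.
    exact: le_trans (h23 x) (h12 x).
  move=> A Atot.
  pose G g := g = p \/ exists2 q : T, A q & g = sval q.
  have [q hq qG] : exists2 q, sublinear q & forall g, G g -> forall x, q x <= g x.
    apply: (chain_sublinear_lbound (p := p)) => [|g|g1 g2].
    - by exists p; left.
    - by case=> [->|[q _ ->]]; [split|exact: (svalP q)].
    - case=> [->|[q1 Aq1 ->]]; case=> [->|[q2 Aq2 ->]].
      + by left.
      + by right => x; exact: (svalP q2).2.
      + by left => x; exact: (svalP q1).2.
      + by case: (Atot _ _ Aq1 Aq2) => /asboolP h; [right|left].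
  exists (exist _ q (conj hq (qG p (or_introl erefl)))) => q' Aq'.
  by apply/asboolP; apply: qG; right; exists q'.
exists q; split=> // r hr rq x.
have rp y : r y <= p y := le_trans (rq y) (qp y).
have qr : ge_fun (exist _ q (conj hq qp)) (exist _ r (conj hr rp)) by apply/asboolP.
by have /asboolP := qmin _ qr; apply.
Qed.

(* The sublinear functional [x |-> inf_(t >= 0) q (x + t x0) - t q x0] lies
   below [q], hence equals it by minimality; at [x = - x0] it is at most
   [- q x0]. *)
Lemma minimal_sublinearN q : sublinear q ->
  (forall r, sublinear r -> (forall x, r x <= q x) -> forall x, q x <= r x) ->
  forall x, q (- x) = - q x.
Proof.
move=> hq qmin x0.
pose S x := [set q (x + t *: x0) - t * q x0 | t in [set t : R | 0 <= t]].
have Sq x : S x (q x) by exists 0; rewrite /= ?scale0r ?addr0 ?mul0r ?subr0.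
have Slb x : has_lbound (S x).
  exists (- q (- x)) => _ [t /= t0 <-].
  have := hq.1 (x + t *: x0) (- x).
  by rewrite addrC addKr sublinearZ_ge0 //; lra.
have Ssub : sublinear (fun x => inf (S x)).
  apply: inf_sublinear => [x|//|x y _ _ [t1 /= t10 <-] [t2 /= t20 <-]|].
  - by exists (q x).
  - exists (q (x + y + (t1 + t2) *: x0) - (t1 + t2) * q x0).
      by exists (t1 + t2) => //=; rewrite addr_ge0.
    have := hq.1 (x + t1 *: x0) (y + t2 *: x0).
    by rewrite addrACA -scalerDl; lra.
  - move=> a x _ a0 [t /= t0 <-].
    exists (q (a *: x + (a * t) *: x0) - (a * t) * q x0).
      by exists (a * t) => //=; rewrite mulr_ge0 // ltW.
    by rewrite -scalerA -scalerDr hq.2 // mulrBr mulrA.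
have /(_ (- x0)) := qmin _ Ssub (fun x => ge_inf (Slb x) (Sq x)).
have : inf (S (- x0)) <= q (- x0 + 1 *: x0) - 1 * q x0.
  by apply: (ge_inf (Slb _)); exists 1 => //=; rewrite ler01.
rewrite scale1r addNr sublinear0 // mul1r sub0r.
have := sublinear_geN x0 hq; lra.
Qed.

Lemma sublinearN_linear q : sublinear q -> (forall x, q (- x) = - q x) ->
  linear_functional q.
Proof.
move=> hq qN a x y.
have qD u w : q (u + w) = q u + q w.
  apply/eqP; rewrite eq_le hq.1 /=.
  have := hq.1 (u + w) (- w); rewrite addrK qN; lra.
rewrite qD; congr (_ + _).
have [a0|a0|->] := ltgtP a 0; last by rewrite scale0r mul0r sublinear0.
- have -> : a *: x = (- a) *: (- x) by rewrite scaleNr scalerN opprK.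
  by rewrite hq.2 ?oppr_gt0 // qN mulrNN.
- exact: hq.2.
Qed.

Theorem Hahn_Banach p : sublinear p ->
  exists2 f, linear_functional f & forall x, f x <= p x.
Proof.
move=> /exists_minimal_sublinear[q [hq qp qmin]].
by exists q => //; apply: sublinearN_linear => //; exact: minimal_sublinearN.
Qed.

Lemma linear_functionalB f x y : linear_functional f -> f (x - y) = f x - f y.
Proof. by move=> lf; rewrite addrC -scaleN1r lf mulN1r addrC. Qed.

Lemma linear_functional0 f : linear_functional f -> f 0 = 0.
Proof. by move=> lf; have := lf 1 0 0; rewrite scaler0 add0r mul1r; lra. Qed.

Lemma linear_functionalN f x : linear_functional f -> f (- x) = - f x.
Proof.
by move=> lf; rewrite -[- x]sub0r linear_functionalB // linear_functional0 // sub0r.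
Qed.

End HahnBanach.

Section Separation.
Context {R : realType} {V : normedModType R}.
Implicit Types (A D : set V) (x y z : V).

Lemma convex_setP A : convex_set A <->
  forall x y (l : R), A x -> A y -> 0 <= l -> l <= 1 -> A (l *: x + (1 - l) *: y).
Proof.
split=> [cA x y l Ax Ay l0 l1|cA]; last move=> x y l.
  by have := cA x y (Itv01 l0 l1) (mem_set Ax) (mem_set Ay); rewrite inE.
by rewrite !inE => Ax Ay; apply: cA.
Qed.

Lemma convex_combBr x y c (l : R) :
  l *: x + (1 - l) *: y - c = l *: (x - c) + (1 - l) *: (y - c).
Proof. by rewrite !scalerBr addrACA -opprD -scalerDl subrKC scale1r. Qed.

Lemma convex_setBr A c : convex_set A -> convex_set [set a - c | a in A].
Proof.
move=> /convex_setP cA; apply/convex_setP => _ _ l [a1 Aa1 <-] [a2 Aa2 <-] l0 l1.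
by exists (l *: a1 + (1 - l) *: a2); [exact: cA|rewrite convex_combBr].
Qed.

Lemma convex_set_norm_le (c : V) (r : R) : convex_set [set y | `|y - c| <= r].
Proof.
apply/convex_setP => y1 y2 l /= y1r y2r l0 l1; rewrite convex_combBr.
apply: le_trans (ler_normD _ _) _; rewrite !normrZ !ger0_norm ?subr_ge0 //.
have l1' : 0 <= 1 - l by rewrite subr_ge0.
by have := ler_wpM2l l0 y1r; have := ler_wpM2l l1' y2r; lra.
Qed.

Lemma continuous_norm_subr (c : V) : continuous (fun y => `|y - c|).
Proof. by move=> y; apply: cvg_norm; apply: cvgB; [exact: cvg_id|exact: cvg_cst]. Qed.

Lemma convex_conic_comb D z1 z2 (l1 l2 : R) : convex_set D -> D z1 -> D z2 ->
  0 <= l1 -> 0 <= l2 -> exists2 z, D z & l1 *: z1 + l2 *: z2 = (l1 + l2) *: z.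
Proof.
move=> /convex_setP cD Dz1 Dz2 l10 l20.
have [/eqP|s0] := eqVneq (l1 + l2) 0.
  rewrite paddr_eq0 // => /andP[/eqP-> /eqP->].
  by exists z1; rewrite // addr0 !scale0r addr0.
have sp : 0 < l1 + l2 by rewrite lt_neqAle eq_sym s0 addr_ge0.
exists (l1 / (l1 + l2) *: z1 + (1 - l1 / (l1 + l2)) *: z2).
  by apply: cD; rewrite ?divr_ge0 ?ler_pdivrMr ?mul1r ?lerDl // ltW.
rewrite scalerDr !scalerA mulrBr mulr1 mulrCA mulfV // mulr1; congr (_ + _ *: _).
by rewrite addrC addKr.
Qed.

Theorem convex_separation D (δ : R) : convex_set D -> D !=set0 ->
  (forall z, D z -> δ <= `|z|) ->
  exists f, [/\ linear_functional f, forall y, `|f y| <= `|y| &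
                forall z, D z -> δ <= f z].
Proof.
move=> cD [z0 Dz0] Dδ.
(* The gauge [p y = inf_(l >= 0, z in D) `|y + l z| - l δ] is sublinear,
   below the norm, and at most [- δ] on [- D]. *)
pose S y := [set r | exists l z, [/\ 0 <= l, D z & r = `|y + l *: z| - l * δ]].
have Snorm y : S y `|y| by exists 0, z0; rewrite scale0r addr0 mul0r subr0.
have Slb y : has_lbound (S y).
  exists (- `|y|) => _ [l [z [l0 Dz ->]]].
  have := lerB_normD (l *: z) y; rewrite normrZ ger0_norm // (addrC (l *: z) y).
  have := ler_wpM2l l0 (Dδ z Dz); lra.
pose p y := inf (S y).
have pS y r : S y r -> p y <= r by exact: (ge_inf (Slb y)).
have hp : sublinear p.
  apply: inf_sublinear => [y|//||].
  - by exists `|y|.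
  - move=> x y _ _ [l1 [z1 [l10 Dz1 ->]]] [l2 [z2 [l20 Dz2 ->]]].
    have [z Dz e] := convex_conic_comb cD Dz1 Dz2 l10 l20.
    exists (`|x + y + (l1 + l2) *: z| - (l1 + l2) * δ).
      by exists (l1 + l2), z; split => //; exact: addr_ge0.
    rewrite -e addrACA.
    have := ler_normD (x + l1 *: z1) (y + l2 *: z2); lra.
  - move=> a x _ a0 [l [z [l0 Dz ->]]].
    exists (`|a *: x + (a * l) *: z| - (a * l) * δ).
      by exists (a * l), z; split => //; rewrite mulr_ge0 // ltW.
    by rewrite -scalerA -scalerDr normrZ gtr0_norm // mulrBr mulrA.
have [f lf fp] := Hahn_Banach hp.
exists f; split=> // [y|z Dz].
- rewrite ler_norml; apply/andP; split; last exact: le_trans (fp y) (pS _ _ (Snorm y)).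
  have := le_trans (fp (- y)) (pS _ _ (Snorm (- y))).
  by rewrite normrN linear_functionalN //; lra.
- have : p (- z) <= `|- z + 1 *: z| - 1 * δ by apply: pS; exists 1, z; split.
  have := fp (- z); rewrite linear_functionalN // scale1r addNr normr0 mul1r; lra.
Qed.

End Separation.

Lemma ultra_bounded_cvg {R : realType} {T : Type} (U : set_system T)
    {UU : UltraFilter U} (a : T -> R) (B : R) :
  (forall t, `|a t| <= B) -> cvg (a @ U).
Proof.
move=> aB; apply/cvg_ex.
have : (a @ U) [set` `[- B, B]].
  by apply: (@filterE _ U) => t; rewrite /= in_itv /= -ler_norml.
move=> /segment_compact[l [_ cl]]; exists l => N Nl.
have [//|UnN] := in_ultra_setVsetC (a @^-1` N) UU.
by have [y []] := cl (~` N) N UnN Nl.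
Qed.

Lemma closed_le_continuous {R : realType} {T : topologicalType} (f g : T -> R) :
  continuous f -> continuous g -> closed [set x | f x <= g x].
Proof.
move=> cf cg.
have -> : [set x | f x <= g x] = (g - f) @^-1` [set r | 0 <= r].
  by apply/seteqP; split => x /=; rewrite subr_ge0.
apply: (@preimage_closed T R (g - f)); last exact: closed_ge.
by move=> x _; exact: continuousB (cg x) (cf x).
Qed.

Section WeakLimits.
Context {R : realType} {V : normedModType R}.

Definition weak_limit {T : Type} (U : set_system T) (u : T -> V) (d : V) :=
  forall f, bdd_lin_fun f -> f \o u @ U --> f d.

Lemma bidual_eltP (Phi : (V -> R) -> R) (M : R) :
  (forall (a : R) f g, bdd_lin_fun f -> bdd_lin_fun g ->
      Phi (fun x => a * f x + g x) = a * Phi f + Phi g) ->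
  (forall f (K : R), bdd_lin_fun f -> 0 <= K ->
      (forall x, `|f x| <= K * `|x|) -> `|Phi f| <= M * K) ->
  bidual_elt Phi.
Proof.
move=> Phi_lin Phi_bd; split=> //.
(* A negative [K] bounds [f] only when [V] is trivial, and then [M] must be [0]. *)
have [[y0 y0_neq0]|V0] := pselect (exists y : V, y != 0).
  exists M => f K hf fK; apply: Phi_bd => //.
  have := fK y0; rewrite -(normr_gt0 y0) in y0_neq0.
  by rewrite -(pmulr_lge0 _ y0_neq0); apply: le_trans.
exists 0 => f K [lf _] _; rewrite mul0r.
suff f0 x : `|f x| <= 0 * `|x|.
  by have := Phi_bd f 0 (conj lf (ex_intro _ 0 f0)) (lexx 0) f0; rewrite mulr0.
have -> : x = 0 by apply: contrapT => /eqP x_neq0; apply: V0; exists x.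
by rewrite linear_functional0 // normr0 mul0r.
Qed.

Lemma reflexive_bounded_weak_limit {T : Type} (U : set_system T)
    {UU : UltraFilter U} (u : T -> V) (B : R) :
  @reflexive_space R V -> (forall t, `|u t| <= B) -> exists d, weak_limit U u d.
Proof.
move=> reflV uB.
pose Phi (f : V -> R) := lim (f \o u @ U).
have Phi_cvg f : bdd_lin_fun f -> f \o u @ U --> Phi f.
  move=> [_ [M fM]]; apply: (ultra_bounded_cvg (B := `|M| * B)) => t /=.
  apply: le_trans (fM _) _; apply: le_trans (ler_wpM2r (normr_ge0 _) (ler_norm M)) _.
  exact: ler_wpM2l.
have : bidual_elt Phi.
  apply: (bidual_eltP (M := B)) => [a f g hf hg|f K hf K0 fK].
    apply/cvg_lim => //.
    exact: (cvgD (cvgMl_tmp (a := a) (Phi_cvg f hf)) (Phi_cvg g hg)).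
  rewrite mulrC; apply: (closed_cvg [set r | `|r| <= K * B] _ _ _ (Phi_cvg f hf)).
    by apply: closed_le_continuous; [exact: norm_continuous|exact: cst_continuous].
  by apply: filterE => t /=; apply: le_trans (fK _) _; exact: ler_wpM2l.
move=> /reflV[d hd]; exists d => f hf; rewrite -hd //; exact: Phi_cvg.
Qed.

Lemma weak_limit_closure_convex {T : Type} (U : set_system T) {UF : ProperFilter U}
    (u : T -> V) (d : V) (K : set V) :
  weak_limit U u d -> convex_set K -> U (u @^-1` K) -> closure K d.
Proof.
move=> ud cK UK; apply: contrapT => /existsNP[N /not_implyP[/nbhs_ballP[e /= e0 eN] KN0]].
have Ke k : K k -> e <= `|k - d|.
  move=> Kk; rewrite leNgt; apply/negP => ke; apply: KN0; exists k; split => //.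
  by apply: eN; rewrite -ball_normE /= distrC.
have [t0 Kut0] := filter_ex UK.
have [f [lf fb fK]] : exists f, [/\ linear_functional f, forall y, `|f y| <= `|y| &
    forall z, [set k - d | k in K] z -> e <= f z].
  apply: convex_separation; first exact: convex_setBr.
    by exists (u t0 - d), (u t0).
  by move=> _ [k' Kk' <-]; exact: Ke.
have hf : bdd_lin_fun f by split=> //; exists 1 => y; rewrite mul1r.
suff : f d + e <= f d by lra.
apply: (closed_cvg [set r | f d + e <= r] _ _ _ (ud f hf)); first exact: closed_ge.
apply: filterS UK => t Kut /=.
have := fK (u t - d) (ex_intro2 _ _ (u t) Kut erefl); rewrite linear_functionalB //; lra.
Qed.

End WeakLimits.

Section Homotheties.
Context {R : realType} {V : normedModType R}.
Implicit Types (F : set V) (v x : V).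

Lemma Ft_center F v t : F v -> Ft F v t v.
Proof. by move=> Fv; exists v => //; rewrite -scalerDl subrK scale1r. Qed.

Lemma convex_Ft F v t : convex_set F -> convex_set (Ft F v t).
Proof.
move=> /convex_setP cF; apply/convex_setP => _ _ l [y1 Fy1 <-] [y2 Fy2 <-] l0 l1.
exists (l *: y1 + (1 - l) *: y2); first exact: cF.
rewrite !scalerDr !scalerA addrACA -scalerDl.
by congr (_ *: _ + (_ *: _ + _ *: _)); [ring|exact: mulrC|exact: mulrC].
Qed.

Lemma Ft_subset F v (s t : R) : convex_set F -> F v -> 0 < s -> s <= t ->
  Ft F v s `<=` Ft F v t.
Proof.
move=> /convex_setP cF Fv s0 st _ [y Fy <-].
have t0 : 0 < t := lt_le_trans s0 st.
exists (s / t *: y + (1 - s / t) *: v).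
  by apply: cF; rewrite ?divr_ge0 ?ler_pdivrMr ?mul1r // ltW.
rewrite scalerDr !scalerA addrCA -scalerDl [RHS]addrC.
by congr (_ *: _ + _ *: _); field; rewrite gt_eqF.
Qed.

Lemma convex_bigcup_Ft F v : convex_set F -> F v ->
  convex_set (\bigcup_(t in [set t : R | 0 < t]) Ft F v t).
Proof.
move=> cF Fv; apply/convex_setP => y z l [s /= s0 Fsy] [t /= t0 Ftz] l0 l1.
have [st|ts] := leP s t.
  exists t => //; move/convex_setP: (convex_Ft (v := v) (t := t) cF); apply => //.
  exact: Ft_subset cF Fv s0 st _ Fsy.
exists s => //; move/convex_setP: (convex_Ft (v := v) (t := s) cF); apply => //.
exact: Ft_subset cF Fv t0 (ltW ts) _ Ftz.
Qed.

Lemma existence_set_Ft F v t : existence_set F -> 0 < t -> existence_set (Ft F v t).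
Proof.
move=> [[y0 Fy0] RF_F] t0; split; first by exists ((1 - t) *: v + t *: y0), y0.
move=> x; have [e [Fe eR]] := RF_F (v + t^-1 *: (x - v)).
exists ((1 - t) *: v + t *: e); split; first by exists e.
move=> _ [y Fy <-].
have -> : (1 - t) *: v + t *: e - ((1 - t) *: v + t *: y) = t *: (e - y).
  by rewrite opprD addrACA subrr add0r scalerBr.
have -> : x - ((1 - t) *: v + t *: y) = t *: (v + t^-1 *: (x - v) - y).
  rewrite scalerBr scalerDr scalerA mulfV ?gt_eqF // scale1r scalerBl scale1r.
  by rewrite opprD opprB addrA; congr (_ - _); rewrite addrCA.
by rewrite !normrZ gtr0_norm // ler_pM2l // eR.
Qed.

Lemma weak_limit_RF_Cv F v x (u : nat -> V) (U : set_system nat)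
    {UF : ProperFilter U} (d : V) :
  convex_set F -> F v -> \oo `<=` U ->
  (forall n, RF (Ft F v n.+1%:R) x (u n)) -> weak_limit U u d -> RF (Cv F v) x d.
Proof.
move=> cF Fv Uoo u_near ud.
have u_eventually N (P : set V) : (forall n, (N <= n)%N -> P (u n)) -> U (u @^-1` P).
  by move=> hP; apply: Uoo; exists N => // n /= /hP.
pose E := [set c | `|c - d| <= `|c - x|].
have union_E : \bigcup_(t in [set t : R | 0 < t]) Ft F v t `<=` E.
  move=> c [s /= s0 Fsc].
  have : closure [set y | `|y - c| <= `|x - c|] d.
    apply: (weak_limit_closure_convex ud); first exact: convex_set_norm_le.
    apply: (u_eventually (Num.Def.archi_bound s)) => n sn; apply: (u_near n).2.
    have sn1 : s <= n.+1%:R.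
      apply: ltW (lt_le_trans (archi_boundP (ltW s0)) _).
      by rewrite ler_nat; exact: leqW.
    exact: Ft_subset cF Fv s0 sn1 _ Fsc.
  have ball_closed : closed [set y | `|y - c| <= `|x - c|].
    by apply: closed_le_continuous; [exact: continuous_norm_subr|exact: cst_continuous].
  by rewrite -(closure_id _).1 //= /E /= distrC [`|c - x|]distrC.
have E_closed : closed E by apply: closed_le_continuous; exact: continuous_norm_subr.
split=> [|c]; last first.
  rewrite /Cv closureE => /(smallest_sub E_closed union_E).
  by rewrite /E /= distrC [`|c - x|]distrC.
apply: weak_limit_closure_convex ud (convex_bigcup_Ft cF Fv) _.
by apply: (u_eventually 0%N) => n _; exists n.+1%:R; [exact: ltr0Sn|exact: (u_near n).1].
Qed.

End Homotheties.

Theorem corollary14 (R : realType) (V : completeNormedModType R)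
  (F : set V) (v : V) :
  @reflexive_space R V -> convex_set F -> existence_set F -> F v ->
  existence_set (Cv F v).
Proof.
move=> reflV cF exF Fv.
split=> [|x].
  by exists v; apply: subset_closure; exists 1; [exact: ltr01|exact: Ft_center].
have [u u_near] : {u : nat -> V & forall n, RF (Ft F v n.+1%:R) x (u n)}.
  apply: (@choice _ _ (fun n => RF (Ft F v n.+1%:R) x)) => n.
  exact: (existence_set_Ft v exF (ltr0Sn R n)).2 x.
have u_bdd n : `|u n| <= `|x - v| + `|v|.
  have := (u_near n).2 v (Ft_center _ Fv).
  by have := ler_normD (u n - v) v; rewrite subrK; lra.
have [U [UU Uoo]] :=
  ultraFilterLemma (eventually_filter : ProperFilter (\oo : set_system nat)).
have [d ud] := reflexive_bounded_weak_limit (U := U) reflV u_bdd.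
by exists d; exact: weak_limit_RF_Cv cF Fv Uoo u_near ud.
Qed.
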